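(* Let $\phi:[0,1]\to[0,1]$ be a nondecreasing continuous function such that $\phi(x)>x$ for all $x\in(0,1)$, and let $V_\phi$ be the operator on $L_2[0,1]$ given by $(V_\phi f)(x)=\int_0^{\phi(x)}f(t)\,dt$. Then its Fredholm determinant is $$D_{V_\phi}(\lambda)=1+\sum_{n=1}^\infty(-1)^n\lambda^n\int_0^1\int_{\phi(t_1)}^1\cdots\int_{\phi(t_{n-1})}^1 dt_n\cdots dt_1 .$$
   Context: $V_\phi$ is the integral operator $(V_\phi f)(x)=\int_0^1 k(x,t)f(t)\,dt$ with bounded kernel $k(x,t)=1$ if $t\le\phi(x)$ and $k(x,t)=0$ if $t>\phi(x)$. For an integral operator $K$ on $L_2[0,1]$ with bounded kernel $k(x,t)$, its Fredholm determinant is $D_K(\lambda)=\sum_{n=0}^\infty\frac{(-1)^n}{n!}A_n\lambda^n$, where $A_0=1$ and for $n\ge1$, $A_n=\int_0^1\cdots\int_0^1\det\big(k(t_i,t_j)\big)_{i,j=1}^n\,dt_1\cdots dt_n$. *)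

From HB Require Import structures.
From mathcomp Require Import all_boot all_order all_algebra.
From mathcomp Require Import all_classical all_reals all_analysis.
Set Implicit Arguments. Unset Strict Implicit. Unset Printing Implicit Defensive.
Import Order.TTheory GRing.Theory Num.Theory.
Import numFieldNormedType.Exports.
Local Open Scope classical_set_scope.
Local Open Scope ring_scope.

Definition Vkernel (R : realType) (phi : R -> R) (x t : R) : R :=
  if t <= phi x then 1 else 0.

Definition scons (R : Type) (x : R) (t : nat -> R) : nat -> R :=
  fun k => if k is k'.+1 then t k' else x.

(* n-fold integral over [0,1]^n of F(t_0,...,t_{n-1}) (Lebesgue measure),
   written as iterated integrals, the outermost one in the variable t_0. *)
Fixpoint cube_int (R : realType) (n : nat) (F : (nat -> R) -> R) : R :=
  match n with
  | 0 => F (fun _ => 0)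
  | m.+1 => Rintegral (@lebesgue_measure R) `[0, 1]%classic
              (fun x => cube_int m (fun t => F (scons x t)))
  end.

Definition fredA (R : realType) (k : R -> R -> R) (n : nat) : R :=
  cube_int n (fun t => \det (\matrix_(i < n, j < n) k (t i) (t j))).

Definition fred_term (R : realType) (k : R -> R -> R) (lam : R) (n : nat) : R :=
  (-1) ^+ n / n`!%:R * fredA k n * lam ^+ n.

Fixpoint chain_int (R : realType) (phi : R -> R) (n : nat) (a : R) : R :=
  match n with
  | 0 => 1
  | m.+1 => Rintegral (@lebesgue_measure R) `[a, 1]%classic
              (fun s => chain_int phi m (phi s))
  end.

(* Since [x <= phi x], the kernel matrix at points t_1, ..., t_n of [0, 1] has
   determinant 1 when the points are pairwise apart (no two of them satisfy
   t_j <= phi t_i and t_i <= phi t_j) and 0 otherwise: the row of the largest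
   point is all ones, so either a second row is all ones too or its column is a
   unit vector.  Sorted increasingly, pairwise apart points are exactly the
   chains t_1 < t_2 < ... with phi t_i < t_(i+1), so A_n = n! c_n with c_n the
   iterated integral of the statement; this symmetrization is an induction on n
   using Tonelli's theorem.  Hence c_n <= 1 / n!, both series converge
   absolutely, and the Fredholm series is 1 plus the chain series. *)

From HB Require Import structures.
From mathcomp Require Import all_boot all_order all_algebra.
From mathcomp Require Import all_classical all_reals all_analysis.
From mathcomp Require Import measurable_realfun lra ring.
Set Implicit Arguments.
Unset Strict Implicit.
Unset Printing Implicit Defensive.
Import Order.TTheory GRing.Theory Num.Theory.
Import numFieldNormedType.Exports.
Local Open Scope classical_set_scope.
Local Open Scope ring_scope.

Section SeparationDeterminant.
Variables (R : realType) (phi : R -> R).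

Definition apart (x y : R) : bool := ~~ ((y <= phi x) && (x <= phi y)).

Definition pairwise_apart n (w : 'I_n -> R) : bool :=
  [forall i, forall j, (i != j) ==> apart (w i) (w j)].

Lemma apartC x y : apart x y = apart y x.
Proof. by rewrite /apart andbC. Qed.

Lemma pairwise_apart_lift n (w : 'I_n.+1 -> R) (m : 'I_n.+1) :
  pairwise_apart w =
  [forall j, apart (w m) (w (lift m j))] &&
  pairwise_apart (fun j => w (lift m j)).
Proof.
apply/idP/andP => [/forallP sep_w|[/forallP sep_m /forallP sep_lift]].
  split; apply/forallP => i.
    by have /forallP/(_ (lift m i))/implyP := sep_w m; apply; rewrite neq_lift.
  apply/forallP => j; apply/implyP => ij.
  have /forallP/(_ (lift m j))/implyP := sep_w (lift m i); apply.
  by rewrite (inj_eq lift_inj).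
apply/forallP => i; apply/forallP => j; apply/implyP => ij.
case: (unliftP m i) ij => [i' ->|->]; case: (unliftP m j) => [j' ->|->] //.
- by rewrite (inj_eq lift_inj) => ij; have /forallP/(_ j')/implyP := sep_lift i'; apply.
- by rewrite apartC.
- by rewrite eqxx.
Qed.

Lemma det_Vkernel n (w : 'I_n -> R) : (forall i, w i <= phi (w i)) ->
  \det (\matrix_(i, j) Vkernel phi (w i) (w j)) = (pairwise_apart w)%:R.
Proof.
elim: n w => [|n IH] w w_le.
  by rewrite det_mx00 (_ : pairwise_apart w); last by apply/forallP => -[].
have [m _ w_max] := @arg_maxP _ _ _ ord0 xpredT w isT.
have [/existsP[i /andP[im wm_le]]|/existsPn far] :=
  boolP [exists i, (i != m) && (w m <= phi (w i))].
  (* [w m] is maximal, so rows [i] and [m] both consist of ones *)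
  have -> : pairwise_apart w = false.
    apply/negbTE/forallP => /(_ i)/forallP/(_ m); rewrite im /apart wm_le /=.
    by rewrite (le_trans (w_max i isT) (w_le m)).
  apply: (determinant_alternate im) => k; rewrite !mxE /Vkernel.
  by rewrite (le_trans (w_max k isT) wm_le) (le_trans (w_max k isT) (w_le m)).
have far_m j : ~~ (w m <= phi (w (lift m j))).
  by have := far (lift m j); rewrite eq_sym neq_lift.
rewrite (expand_det_col _ m) (bigD1 m) //= big1 ?addr0; last first.
  move=> i im; case: (unliftP m i) im => [j ->|->]; last by rewrite eqxx.
  by rewrite !mxE /Vkernel (negbTE (far_m j)) mul0r.
rewrite !mxE /Vkernel w_le mul1r /cofactor -signr_odd addnn odd_double mul1r.
have sep_m : [forall j, apart (w m) (w (lift m j))].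
  by apply/forallP => j; rewrite /apart negb_and far_m orbT.
rewrite (pairwise_apart_lift _ m) sep_m -IH => [|j]; last exact: w_le.
by congr (\det _); apply/matrixP => i j; rewrite !mxE.
Qed.

End SeparationDeterminant.

Section CubeIntegral.
Variable R : realType.

Lemma eq_cube_int n (F G : (nat -> R) -> R) :
  (forall t, (forall i, (i < n)%N -> 0 <= t i <= 1) -> F t = G t) ->
  cube_int n F = cube_int n G.
Proof.
elim: n F G => [|n IH] F G FG /=; first exact: FG.
apply: eq_Rintegral => x /set_mem; rewrite /= in_itv /= => x01.
by apply: IH => t t01; apply: FG => -[|i] //= /t01.
Qed.

Lemma cube_int0 n : cube_int n (fun _ : nat -> R => 0) = 0.
Proof.
elim: n => [|n IH] //=.
transitivity (Rintegral (@lebesgue_measure R) `[0, 1] (cst 0)).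
  by apply: eq_Rintegral => x _; exact: IH.
by rewrite Rintegral_cst // mul0r.
Qed.

Lemma forall_scons n (P : pred R) x (t : nat -> R) :
  [forall i : 'I_n.+1, P (scons x t i)] = P x && [forall i : 'I_n, P (t i)].
Proof.
apply/forallP/andP => [Pxt|[Px /forallP Pt] i].
  by split; [exact: (Pxt ord0)|apply/forallP => i; have := Pxt (lift ord0 i)].
by case: (unliftP ord0 i) => [j ->|->] //; exact: Pt.
Qed.

End CubeIntegral.

Lemma phi_ge_id (R : realType) (phi : R -> R) :
  (forall x, 0 <= x <= 1 -> 0 <= phi x <= 1) ->
  (forall x y, 0 <= x -> x <= y -> y <= 1 -> phi x <= phi y) ->
  (forall x, 0 < x < 1 -> x < phi x) ->
  forall y, 0 <= y <= 1 -> y <= phi y.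
Proof.
move=> phi01 phi_mono phi_gt y /andP[y0 y1].
have [->|yn0] := eqVneq y 0; first by have /andP[] := phi01 0 ltac:(lra).
have [->|yn1] := eqVneq y 1; last first.
  by apply/ltW/phi_gt; rewrite !lt_neqAle eq_sym yn0 yn1 y0 y1.
have /andP[p0 p1] := phi01 1 ltac:(lra).
rewrite leNgt; apply/negP => phi1_lt1.
(* the midpoint [z] of [phi 1] and [1] would satisfy [phi 1 < z < phi z <= phi 1] *)
pose z := (phi 1 + 1) / 2.
have : z < phi z by apply: phi_gt; rewrite /z; apply/andP; split; lra.
have := @phi_mono z 1 ltac:(rewrite /z; lra) ltac:(rewrite /z; lra) ltac:(lra).
rewrite /z; lra.
Qed.

Section LebesgueIntegrals.
Variable R : realType.
Local Notation mu := (@lebesgue_measure R).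

Lemma in_setb (T : Type) (b : T -> bool) x : (x \in [set y | b y]) = b x.
Proof. by apply/idP/idP => [/set_mem|/mem_set]. Qed.

Lemma in_itv_gt (a s : R) : (s \in `]a, +oo[%classic) = (a < s).
Proof. by rewrite in_setb in_itv /= andbT. Qed.

Lemma measurable_lt d (T : measurableType d) (f g : T -> R) :
  measurable_fun setT f -> measurable_fun setT g -> measurable [set x | f x < g x].
Proof.
by move=> mf mg; have := measurable_fun_ltr mf mg measurableT (Y := [set true]) I;
  rewrite setTI.
Qed.

Lemma measurable_preimage_fst (A : set R) :
  measurable A -> measurable [set p : R * R | A p.1].
Proof.
by move=> mA; have := @measurable_fst _ _ R R measurableT _ mA; rewrite setTI.
Qed.

Lemma measurable_preimage_snd (A : set R) :
  measurable A -> measurable [set p : R * R | A p.2].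
Proof.
by move=> mA; have := @measurable_snd _ _ R R measurableT _ mA; rewrite setTI.
Qed.

Lemma integral_indic_mul (D : set R) (f : R -> \bar R) :
  (\int[mu]_(x in D) f x = \int[mu]_x ((\1_D x)%:E * f x))%E.
Proof.
rewrite integral_mkcond; apply: eq_integral => x _.
by rewrite patchE indicE; case: ifP => _; rewrite ?mul1e ?mul0e.
Qed.

Lemma Rintegral01_indic (u : set R) (h : R -> \bar R) (c : R) :
  measurable u -> u `<=` `[0, 1]%classic -> measurable_fun setT h ->
  (forall x, 0 <= h x)%E -> (forall x, h x \is a fin_num) -> 0 <= c ->
  (\int[mu]_(x in u) h x)%E \is a fin_num ->
  Rintegral mu `[0, 1]%classic (fun x => (x \in u)%:R * (c * fine (h x))) =
  c * fine (\int[mu]_(x in u) h x)%E.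
Proof.
move=> mu_ u01 mh h0 hfin c0 Ifin.
rewrite /Rintegral -[c in RHS]/(fine c%:E) -fineM //; congr fine.
have mhu : measurable_fun setT (fun x => ((\1_u x)%:E * h x)%E).
  by apply: emeasurable_funM => //; apply/measurable_EFinP; exact: measurable_indic.
have hu0 x : (0 <= (\1_u x)%:E * h x)%E by apply: mule_ge0; rewrite ?lee_fin ?indicE.
rewrite [LHS]integral_indic_mul [in RHS]integral_indic_mul -ge0_integralZl ?lee_fin //.
apply: eq_integral => x _; rewrite !indicE.
have [xu|xu] := boolP (x \in u); last by rewrite /= !mul0r mul0e !mule0.
have x01 : x \in `[0, 1]%classic by apply/mem_set/u01/set_mem.
by rewrite x01 /= !mul1e mul1r EFinM fineK.
Qed.

End LebesgueIntegrals.

Section ChainIntegrals.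
Variables (R : realType) (phi : R -> R).
Hypothesis phi_mono : forall x y, 0 <= x -> x <= y -> y <= 1 -> phi x <= phi y.
Hypothesis phi_ge : forall y, 0 <= y <= 1 -> y <= phi y.
Hypothesis phi01 : forall x, 0 <= x <= 1 -> 0 <= phi x <= 1.
Local Notation mu := (@lebesgue_measure R).

Definition clamp01 (x : R) : R := Num.min (Num.max x 0) 1.

Lemma clamp01_in01 x : 0 <= clamp01 x <= 1.
Proof. by rewrite /clamp01 le_min ler01 le_max lexx orbT ge_min lexx orbT. Qed.

Lemma clamp01_id x : 0 <= x <= 1 -> clamp01 x = x.
Proof. by move=> /andP[x0 x1]; rewrite /clamp01 (max_l x0) (min_l x1). Qed.

Lemma clamp01_nd : nondecreasing_fun clamp01.
Proof. by move=> x y xy; apply: le_min2 => //; apply: le_max2. Qed.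

(* A nondecreasing extension of [phi] to the whole line, hence Borel measurable. *)
Definition phi_ext (x : R) : R := phi (clamp01 x).

Lemma phi_extE x : 0 <= x <= 1 -> phi_ext x = phi x.
Proof. by move=> x01; rewrite /phi_ext clamp01_id. Qed.

Lemma phi_ext_ge x : 0 <= x <= 1 -> x <= phi_ext x.
Proof. by move=> x01; rewrite phi_extE //; exact: phi_ge. Qed.

Lemma phi_ext_nd : nondecreasing_fun phi_ext.
Proof.
move=> x y xy; have /andP[x0 _] := clamp01_in01 x; have /andP[_ y1] := clamp01_in01 y.
exact: phi_mono (clamp01_nd xy) y1.
Qed.

Lemma measurable_phi_ext : measurable_fun setT phi_ext.
Proof. exact: nondecreasing_measurable phi_ext_nd. Qed.

(* [echain u n a] integrates over the chains [a < s_1], [phi s_1 < s_2], ...,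
   [phi s_(n-1) < s_n] with all [s_i] in [u]; it is extended-real valued so that
   Tonelli's theorem applies without integrability side conditions. *)
Fixpoint echain (u : set R) (n : nat) (a : R) : \bar R :=
  if n is m.+1 then (\int[mu]_(s in u `&` `]a, +oo[%classic) echain u m (phi_ext s))%E
  else 1%E.

Lemma echain_ge0 u n a : (0 <= echain u n a)%E.
Proof.
elim: n a => [|n IH] a /=; first by rewrite lee01.
by apply: integral_ge0 => s _; exact: IH.
Qed.

Lemma measurable_echain_section (W : set (R * R)) n : measurable W ->
  measurable_fun setT (fun z : R * R => echain [set s | W (z.1, s)] n z.2).
Proof.
move=> mW; elim: n => [|n IH]; first exact: measurable_cst.
have m11 : measurable_fun setT (fun p : (R * R) * R => p.1.1).
  exact: measurableT_comp measurable_fst measurable_fst.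
have m12 : measurable_fun setT (fun p : (R * R) * R => p.1.2).
  exact: measurableT_comp measurable_snd measurable_fst.
have m2 : measurable_fun setT (fun p : (R * R) * R => p.2) := measurable_snd.
pose S := [set p : (R * R) * R | W (p.1.1, p.2) /\ p.1.2 < p.2].
pose g p := ((\1_S p)%:E * echain [set s | W (p.1.1, s)] n (phi_ext p.2))%E.
have mS : measurable S.
  rewrite (_ : S = (fun p => (p.1.1, p.2)) @^-1` W `&` [set p | p.1.2 < p.2]) //.
  apply: measurableI; last exact: measurable_lt.
  by have := measurable_fun_pair m11 m2 measurableT mW; rewrite setTI.
have mg : measurable_fun setT g.
  apply: emeasurable_funM; first by apply/measurable_EFinP; exact: measurable_indic.
  exact: measurableT_comp IH
    (measurable_fun_pair m11 (measurableT_comp measurable_phi_ext m2)).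
have g0 p : (0 <= g p)%E by apply: mule_ge0; [rewrite lee_fin indicE|exact: echain_ge0].
rewrite (_ : (fun z => _) = fubini_F mu g); first exact: measurable_fun_fubini_tonelli_F.
apply/funext => z; rewrite /= /fubini_F integral_indic_mul; apply: eq_integral => s _.
rewrite /g !indicE; congr ((_ : bool)%:R%:E * _)%E.
by apply/idP/idP => /set_mem[Ws zs]; apply/mem_set; split => //=;
  move: zs; rewrite /= in_itv /= andbT.
Qed.

Lemma measurable_echain (u : set R) n : measurable u -> measurable_fun setT (echain u n).
Proof.
move=> mu_; have := measurable_echain_section n (measurable_preimage_snd mu_).
by move/(measurable_fun_pair2 (0 : R)).
Qed.

Lemma measurable_echain_phi (u : set R) n : measurable u ->
  measurable_fun setT (fun s => echain u n (phi_ext s)).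
Proof.
by move=> mu_; exact: measurableT_comp (measurable_echain n mu_) measurable_phi_ext.
Qed.

Lemma lebesgue_measure01 : mu `[0, 1]%classic = 1%E.
Proof. by rewrite lebesgue_measure_itv /= lte_fin ltr01 sube0. Qed.

Lemma echain_le1 (u : set R) n a : measurable u -> u `<=` `[0, 1]%classic ->
  (echain u n a <= 1)%E.
Proof.
move=> mu_ u01; elim: n a => [|n IH] a /=; first by rewrite lexx.
have mD : measurable (u `&` `]a, +oo[%classic) by exact: measurableI.
apply: (@le_trans _ _ (\int[mu]_(s in u `&` `]a, +oo[%classic) (cst 1%E) s)%E).
  apply: ge0_le_integral => //; first by move=> s _; exact: echain_ge0.
  by apply/measurable_funTS; exact: measurable_echain_phi.
rewrite integral_cst // mul1e -lebesgue_measure01.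
by apply: le_measure; rewrite ?inE // => s [/u01].
Qed.

Lemma echain_fin_num (u : set R) n a : measurable u -> u `<=` `[0, 1]%classic ->
  echain u n a \is a fin_num.
Proof.
move=> mu_ u01; rewrite ge0_fin_numE ?echain_ge0 //.
exact: le_lt_trans (echain_le1 n a mu_ u01) (ltry 1).
Qed.

Lemma echain_local (u v : set R) n a : u `<=` `[0, 1]%classic ->
  (forall s, a < s -> u s <-> v s) -> echain u n a = echain v n a.
Proof.
move=> u01; elim: n a => [|n IH] a uv //=.
have itv_gt s : `]a, +oo[%classic s -> a < s by rewrite /= in_itv /= andbT.
have -> : u `&` `]a, +oo[%classic = v `&` `]a, +oo[%classic.
  by apply/seteqP; split => s [ws /[dup] /itv_gt/uv uvs a_s]; split => //; apply/uvs.
apply: eq_integral => s /set_mem[vs /itv_gt a_s].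
have s01 : 0 <= s <= 1 by have := u01 _ (proj2 (uv s a_s) vs); rewrite /= in_itv.
apply: IH => t ht; apply: uv.
exact: lt_le_trans a_s (le_trans (phi_ext_ge s01) (ltW ht)).
Qed.

Definition sep_set (x : R) : set R := [set y | phi_ext x < y \/ phi_ext y < x].

Lemma in_sep_set x y : (y \in sep_set x) = (phi_ext x < y) || (phi_ext y < x).
Proof. by apply/idP/orP => [/set_mem|/mem_set]. Qed.

Section Symmetrization.
Variable u : set R.
Hypothesis mu_ : measurable u.
Hypothesis u01 : u `<=` `[0, 1]%classic.

Definition sep_graph : set (R * R) := [set p | (u `&` sep_set p.1) p.2].

Lemma measurable_sep_graph : measurable sep_graph.
Proof.
rewrite (_ : sep_graph = [set p | u p.2] `&`
  ([set p | phi_ext p.1 < p.2] `|` [set p | phi_ext p.2 < p.1])) //.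
apply: measurableI; first exact: measurable_preimage_snd.
by apply: measurableU; apply: measurable_lt;
  do ?exact: measurableT_comp measurable_phi_ext _;
  [exact: measurable_snd|exact: measurable_fst].
Qed.

Lemma measurable_sep_set x : measurable (u `&` sep_set x).
Proof.
have := pair1_measurable x measurableT measurable_sep_graph.
by rewrite setTI.
Qed.

Lemma sep_set01 x : u `&` sep_set x `<=` `[0, 1]%classic.
Proof. by move=> s [/u01]. Qed.

Lemma measurable_echain_sep m b :
  measurable_fun setT (fun x => echain (u `&` sep_set x) m b).
Proof. exact: measurable_fun_pair1 b (measurable_echain_section m measurable_sep_graph). Qed.

Definition chain_dom a : set R := u `&` `]a, +oo[%classic.

Lemma in_chain_dom a x : (x \in chain_dom a) = (x \in u) && (a < x).
Proof. by rewrite in_setI in_itv_gt. Qed.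

Lemma measurable_chain_dom a : measurable (chain_dom a).
Proof. exact: measurableI. Qed.

Lemma chain_dom01 a x : x \in chain_dom a -> 0 <= x <= 1.
Proof. by rewrite in_chain_dom => /andP[/set_mem/u01]; rewrite /= in_itv. Qed.

Definition upper_pairs a : set (R * R) := [set p | chain_dom a p.1] `&`
  [set p | chain_dom a p.2] `&` [set p | phi_ext p.1 < p.2].

Definition lower_pairs a : set (R * R) := [set p | chain_dom a p.1] `&`
  [set p | chain_dom a p.2] `&` [set p | phi_ext p.2 < p.1].

Lemma in_upper_pairs a p : (p \in upper_pairs a) =
  [&& p.1 \in chain_dom a, p.2 \in chain_dom a & phi_ext p.1 < p.2].
Proof.
by apply/idP/and3P => [/set_mem[[/mem_set ? /mem_set ?] ?]|[/set_mem ? /set_mem ? ?]] //;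
  exact/mem_set.
Qed.

Lemma in_lower_pairs a p : (p \in lower_pairs a) =
  [&& p.1 \in chain_dom a, p.2 \in chain_dom a & phi_ext p.2 < p.1].
Proof.
by apply/idP/and3P => [/set_mem[[/mem_set ? /mem_set ?] ?]|[/set_mem ? /set_mem ? ?]] //;
  exact/mem_set.
Qed.

Lemma measurable_pairs a : measurable (upper_pairs a) /\ measurable (lower_pairs a).
Proof.
have mD := measurable_chain_dom a.
have mphi1 := measurableT_comp measurable_phi_ext (@measurable_fst _ _ R R).
have mphi2 := measurableT_comp measurable_phi_ext (@measurable_snd _ _ R R).
split; (apply: measurableI; first apply: measurableI);
  do ?[exact: measurable_preimage_fst|exact: measurable_preimage_snd].
  exact: measurable_lt mphi1 measurable_snd.
exact: measurable_lt mphi2 measurable_fst.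
Qed.

Definition upper_integrand a m (p : R * R) : \bar R :=
  ((\1_(upper_pairs a) p)%:E * echain u m (phi_ext p.2))%E.

Definition lower_integrand a m (p : R * R) : \bar R :=
  ((\1_(lower_pairs a) p)%:E * echain (u `&` sep_set p.1) m (phi_ext p.2))%E.

Lemma upper_integrand_ge0 a m p : (0 <= upper_integrand a m p)%E.
Proof. by apply: mule_ge0; [rewrite lee_fin indicE|exact: echain_ge0]. Qed.

Lemma lower_integrand_ge0 a m p : (0 <= lower_integrand a m p)%E.
Proof. by apply: mule_ge0; [rewrite lee_fin indicE|exact: echain_ge0]. Qed.

Lemma measurable_upper_integrand a m : measurable_fun setT (upper_integrand a m).
Proof.
apply: emeasurable_funM.
  by apply/measurable_EFinP/measurable_indic; case: (measurable_pairs a).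
exact: measurableT_comp (measurable_echain_phi m mu_) measurable_snd.
Qed.

Lemma measurable_lower_integrand a m : measurable_fun setT (lower_integrand a m).
Proof.
apply: emeasurable_funM.
  by apply/measurable_EFinP/measurable_indic; case: (measurable_pairs a).
exact: measurableT_comp (measurable_echain_section m measurable_sep_graph)
  (measurable_fun_pair measurable_fst (measurableT_comp measurable_phi_ext measurable_snd)).
Qed.

(* A point [s] apart from [x] lies either above [phi x] or below [x], never
   both since [x <= phi x] and [s <= phi s]; above [phi x], being apart from
   [x] is automatic for the rest of the chain. *)
Lemma echain_sep_split a m x :
  ((\1_(chain_dom a) x)%:E * echain (u `&` sep_set x) m.+1 a =
   \int[mu]_s upper_integrand a m (x, s) + \int[mu]_s lower_integrand a m (x, s))%E.
Proof.
rewrite indicE; have [xD|xD] := boolP (x \in chain_dom a); last first.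
  rewrite mul0e !integral0_eq ?adde0 // => s _;
    by rewrite /upper_integrand /lower_integrand indicE
      ?in_upper_pairs ?in_lower_pairs /= (negbTE xD) mul0e.
rewrite mul1e -ge0_integralD //; first last.
- exact: measurable_fun_pair2 x (measurable_lower_integrand a m).
- by move=> s _; exact: lower_integrand_ge0.
- exact: measurable_fun_pair2 x (measurable_upper_integrand a m).
- by move=> s _; exact: upper_integrand_ge0.
rewrite /= integral_indic_mul; apply: eq_integral => s _.
rewrite /upper_integrand /lower_integrand !indicE in_upper_pairs in_lower_pairs /= xD.
rewrite in_setI in_itv_gt [s \in u `&` _]in_setI in_sep_set.
have [sD|sD] := boolP (s \in chain_dom a); last first.
  by move: sD; rewrite /= in_chain_dom negb_and => /orP[]/negbTE->;
    rewrite ?andbF !mul0e adde0.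
move: (sD); rewrite in_chain_dom => /andP[-> ->] /=.
have x_le := phi_ext_ge (chain_dom01 xD); have s_le := phi_ext_ge (chain_dom01 sD).
have [x_s|_] := boolP (phi_ext x < s); have [s_x|_] := boolP (phi_ext s < x);
  rewrite ?mul1e ?mul0e ?adde0 ?add0e //.
- by exfalso; move: x_s s_x x_le s_le; lra.
- apply: echain_local; first exact: sep_set01.
  move=> t s_t; split; first by case.
  by move=> ut; split => //; left; move: x_s s_le s_t; lra.
Qed.

Lemma integral_upper a m :
  (\int[mu]_x \int[mu]_s upper_integrand a m (x, s) = echain u m.+2 a)%E.
Proof.
rewrite [RHS]/= -/(chain_dom a) [RHS]integral_indic_mul; apply: eq_integral => x _.
rewrite indicE; have [xD|xD] := boolP (x \in chain_dom a); last first.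
  by rewrite mul0e integral0_eq // => s _;
    rewrite /upper_integrand indicE in_upper_pairs /= (negbTE xD) mul0e.
rewrite mul1e /= [RHS]integral_indic_mul; apply: eq_integral => s _.
rewrite /upper_integrand !indicE in_upper_pairs /= xD in_setI in_itv_gt in_chain_dom.
have x_le := phi_ext_ge (chain_dom01 xD).
move: xD; rewrite in_chain_dom => /andP[_ a_x].
have [x_s|_] := boolP (phi_ext x < s); rewrite ?andbT ?andbF //.
by rewrite (_ : a < s) ?andbT //; move: a_x x_le x_s; lra.
Qed.

Lemma integral_lower a m :
  (forall b, \int[mu]_(x in chain_dom b) echain (u `&` sep_set x) m b =
             m.+1%:R%:E * echain u m.+1 b)%E ->
  (\int[mu]_x \int[mu]_s lower_integrand a m (x, s) = m.+1%:R%:E * echain u m.+2 a)%E.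
Proof.
move=> IH; rewrite (@fubini_tonelli _ _ _ _ _ mu mu) //; last first.
- exact: lower_integrand_ge0.
- exact: measurable_lower_integrand.
have mD := measurable_chain_dom a.
rewrite [echain u m.+2 a]/= -/(chain_dom a) -ge0_integralZl //; first last.
- by move=> s _; exact: (echain_ge0 u m.+1).
- by apply/measurable_funTS; exact: (measurable_echain_phi m.+1 mu_).
rewrite [RHS]integral_indic_mul; apply: eq_integral => s _.
rewrite /fubini_G indicE; have [sD|sD] := boolP (s \in chain_dom a); last first.
  by rewrite mul0e integral0_eq // => x _;
    rewrite /lower_integrand indicE in_lower_pairs /= (negbTE sD) andbF mul0e.
have s_le := phi_ext_ge (chain_dom01 sD).
have /andP[_ a_s] : (s \in u) && (a < s) by rewrite -in_chain_dom.
rewrite mul1e -IH [RHS]integral_indic_mul; apply: eq_integral => x _.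
rewrite /lower_integrand !indicE in_lower_pairs /= sD !in_chain_dom.
have [s_x|_] := boolP (phi_ext s < x); rewrite ?andbT ?andbF //.
by rewrite (lt_trans a_s (le_lt_trans s_le s_x)) andbT.
Qed.

Lemma echain_symmetrize m a :
  (\int[mu]_(x in chain_dom a) echain (u `&` sep_set x) m a =
   m.+1%:R%:E * echain u m.+1 a)%E.
Proof.
elim: m a => [|m IH] a; first by rewrite /= mul1e.
have upper_ge0 x : (0 <= \int[mu]_s upper_integrand a m (x, s))%E.
  by apply: integral_ge0 => s _; exact: upper_integrand_ge0.
have lower_ge0 x : (0 <= \int[mu]_s lower_integrand a m (x, s))%E.
  by apply: integral_ge0 => s _; exact: lower_integrand_ge0.
rewrite integral_indic_mul; under eq_integral => x _ do rewrite echain_sep_split.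
have m_up := @measurable_fun_fubini_tonelli_F _ _ _ _ _ mu _
  (measurable_upper_integrand a m) (@upper_integrand_ge0 a m).
have m_low := @measurable_fun_fubini_tonelli_F _ _ _ _ _ mu _
  (measurable_lower_integrand a m) (@lower_integrand_ge0 a m).
rewrite ge0_integralD //.
rewrite integral_upper integral_lower //.
rewrite -(fineK (echain_fin_num m.+2 a mu_ u01)) -EFinM -EFinD.
by congr EFin; rewrite -[m.+2]addn1 natrD mulrDl mul1r addrC.
Qed.

Lemma chain_dom_lt0 a : a < 0 -> chain_dom a = u.
Proof.
move=> a0; apply/seteqP; split=> [x []//|x ux]; split=> //=.
by have := u01 ux; rewrite /= !in_itv /= andbT => /andP[x0 _]; exact: lt_le_trans x0.
Qed.

End Symmetrization.

Lemma fact_echain_le1 (u : set R) n a : measurable u -> u `<=` `[0, 1]%classic ->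
  (n`!%:R%:E * echain u n a <= 1)%E.
Proof.
elim: n u a => [|m IH] u a mu_ u01; first by rewrite mul1e.
have mD := measurable_chain_dom mu_ a.
rewrite factS mulnC natrM EFinM -muleA -echain_symmetrize //.
rewrite -ge0_integralZl //; first last.
- by move=> x _; exact: echain_ge0.
- by apply/measurable_funTS; exact: measurable_echain_sep.
apply: (@le_trans _ _ (\int[mu]_(x in chain_dom u a) (cst 1%E) x)%E).
  apply: ge0_le_integral => //.
  - by move=> x _; apply: mule_ge0; [rewrite lee_fin|exact: echain_ge0].
  - by apply: emeasurable_funM; [exact: measurable_cst|
      apply/measurable_funTS; exact: measurable_echain_sep].
  - by move=> x _; apply: IH; [exact: measurable_sep_set|exact: sep_set01].
rewrite integral_cst // mul1e -lebesgue_measure01.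
by apply: le_measure; rewrite ?inE // => s [/u01].
Qed.

Lemma sep_set_apart x y : 0 <= x <= 1 -> 0 <= y <= 1 ->
  (y \in sep_set x) = apart phi x y.
Proof. by move=> x01 y01; rewrite in_sep_set !phi_extE // /apart negb_and -!ltNge. Qed.

Definition sep_indicator n (u : set R) (t : nat -> R) : R :=
  ([forall i : 'I_n, t i \in u] && pairwise_apart phi (fun i : 'I_n => t i))%:R.

Lemma sep_indicatorS n (u : set R) x t :
  0 <= x <= 1 -> (forall i, (i < n)%N -> 0 <= t i <= 1) ->
  sep_indicator n.+1 u (scons x t) = (x \in u)%:R * sep_indicator n (u `&` sep_set x) t.
Proof.
move=> x01 t01; rewrite /sep_indicator (forall_scons _ (fun y => y \in u)).
rewrite (pairwise_apart_lift _ _ ord0).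
have -> : (fun j : 'I_n => scons x t (lift ord0 j)) = (fun j => t j).
  by apply/funext => j; rewrite lift0.
have -> : [forall i : 'I_n, t i \in u `&` sep_set x] =
    [forall i : 'I_n, t i \in u] && [forall j : 'I_n, apart phi x (t j)].
  apply/forallP/andP => [in_uD|[/forallP in_u /forallP sep_x] i].
    by split; apply/forallP => i; have := in_uD i;
      rewrite in_setI sep_set_apart ?t01 // => /andP[? ?].
  by rewrite /= in_setI in_u sep_set_apart ?t01 ?sep_x.
have -> : [forall j : 'I_n, apart phi (scons x t (@ord0 n)) (scons x t (lift ord0 j))] =
    [forall j : 'I_n, apart phi x (t j)].
  by apply: eq_forallb => j; rewrite lift0.
by case: (x \in u); rewrite /= ?mul1r ?mul0r ?andbA.
Qed.

Lemma cube_int_sep_indicatorS n (u : set R) : cube_int n.+1 (sep_indicator n.+1 u) =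
  Rintegral mu `[0, 1]%classic
    (fun x => (x \in u)%:R * cube_int n (sep_indicator n (u `&` sep_set x))).
Proof.
apply: eq_Rintegral => x /set_mem; rewrite /= in_itv /= => x01.
case: (boolP (x \in u)) => xu; rewrite ?mul1r ?mul0r.
  by apply: eq_cube_int => t t01; rewrite sep_indicatorS // xu mul1r.
rewrite -(cube_int0 R n); apply: eq_cube_int => t t01.
by rewrite sep_indicatorS // (negbTE xu) mul0r.
Qed.

(* The start point [-1] lies below [0, 1]: the first point of the chain is free. *)
Lemma cube_int_sep_indicator n (u : set R) : measurable u -> u `<=` `[0, 1]%classic ->
  cube_int n (sep_indicator n u) = n`!%:R * fine (echain u n (-1)).
Proof.
elim: n u => [|m IH] u mu_ u01.
  have forall_ord0 (P : pred 'I_0) : [forall i, P i] by apply/forallP => -[].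
  by rewrite /= /sep_indicator /pairwise_apart !forall_ord0 mul1r.
have sym := echain_symmetrize mu_ u01 m (-1).
rewrite (chain_dom_lt0 u01) ?ltrN10 // in sym.
rewrite cube_int_sep_indicatorS; transitivity (Rintegral mu `[0, 1]%classic
    (fun x => (x \in u)%:R * (m`!%:R * fine (echain (u `&` sep_set x) m (-1))))).
  apply: eq_Rintegral => x _.
  by rewrite IH //; [exact: measurable_sep_set|exact: sep_set01].
have e_fin n a : echain u n a \is a fin_num by exact: echain_fin_num.
rewrite Rintegral01_indic // ?sym ?fin_numM //.
- by rewrite fineM // mulrA -natrM mulnC -factS.
- exact: measurable_echain_sep.
- by move=> x; exact: echain_ge0.
- by move=> x; apply: echain_fin_num; [exact: measurable_sep_set|exact: sep_set01].
Qed.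

Lemma fredA_Vkernel n : fredA (Vkernel phi) n = cube_int n (sep_indicator n `[0, 1]%classic).
Proof.
apply: eq_cube_int => t t01.
rewrite /sep_indicator (_ : [forall i : 'I_n, t i \in `[0, 1]%classic]) /=; last first.
  by apply/forallP => i; apply/mem_set; rewrite /= in_itv; exact: t01.
by apply: det_Vkernel => i; apply: phi_ge; exact: t01.
Qed.

Lemma Rintegral_chain_int m b : 0 <= b <= 1 ->
  (forall c, 0 <= c <= 1 -> chain_int phi m c = fine (echain `[0, 1]%classic m c)) ->
  Rintegral mu `[b, 1]%classic (fun s => chain_int phi m (phi s)) =
  fine (\int[mu]_(s in `[b, 1%R]%classic) echain `[0%R, 1%R]%classic m (phi_ext s))%E.
Proof.
move=> b01 IH; congr fine; apply: eq_integral => s /set_mem.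
rewrite /= in_itv /= => /andP[bs s1].
have s01 : 0 <= s <= 1 by apply/andP; split => //; move: b01 bs; lra.
rewrite IH ?phi_extE ?phi01 // fineK //; exact: echain_fin_num.
Qed.

Lemma chain_int_echain n b : 0 <= b <= 1 ->
  chain_int phi n b = fine (echain `[0, 1]%classic n b).
Proof.
elim: n b => [|m IH] b b01 //.
rewrite [LHS]/= Rintegral_chain_int //= -integral_itv_obnd_cbnd; last first.
  by apply/measurable_funTS; exact: measurable_echain_phi.
congr (fine (integral _ _ _)); apply/seteqP; split => s /=; rewrite !in_itv /=.
  by move=> /andP[bs s1]; split; [apply/andP; split => //; move: b01 bs; lra|rewrite andbT].
by move=> [/andP[_ s1]]; rewrite andbT => bs; rewrite bs s1.
Qed.

Lemma chain_int0_echain n : chain_int phi n 0 = fine (echain `[0, 1]%classic n (-1)).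
Proof.
case: n => [|m] //; rewrite [LHS]/= Rintegral_chain_int ?lexx ?ler01 //; last first.
  exact: chain_int_echain.
congr (fine (integral _ _ _)); apply/seteqP; split => s /=; rewrite !in_itv /=.
  by move=> /andP[s0 s1]; split; [apply/andP|rewrite andbT; move: s0; lra].
by move=> [].
Qed.

Lemma fredA_Vkernel_chain n : fredA (Vkernel phi) n = n`!%:R * chain_int phi n 0.
Proof. by rewrite fredA_Vkernel cube_int_sep_indicator // chain_int0_echain. Qed.

Lemma chain_int0_ge0 n : 0 <= chain_int phi n 0.
Proof. by rewrite chain_int0_echain fine_ge0 // echain_ge0. Qed.

Lemma fact_chain_int0_le1 n : n`!%:R * chain_int phi n 0 <= 1.
Proof.
rewrite chain_int0_echain -lee_fin EFinM fineK ?echain_fin_num //.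
exact: fact_echain_le1.
Qed.

Lemma fred_term_Vkernel lam n :
  fred_term (Vkernel phi) lam n = (-1) ^+ n * lam ^+ n * chain_int phi n 0.
Proof.
have fact_neq0 : n`!%:R != 0 :> R by rewrite pnatr_eq0 -lt0n fact_gt0.
by rewrite /fred_term fredA_Vkernel_chain; field.
Qed.

End ChainIntegrals.

Lemma cvg_series_fact_bounded (R : realType) (c : nat -> R) (lam : R) :
  (forall n, 0 <= c n) -> (forall n, n`!%:R * c n <= 1) ->
  cvgn (series (fun n => (-1) ^+ n.+1 * lam ^+ n.+1 * c n.+1)).
Proof.
move=> c0 c_le; apply: normed_cvg.
apply: (@series_le_cvg _ _ (`|lam| *: exp_coeff `|lam|)).
- by move=> n; rewrite /=.
- by move=> n; rewrite /exp_coeff /= mulr_ge0 // divr_ge0 // exprn_ge0.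
- move=> n; rewrite /exp_coeff /= !normrM normrX normrN1 expr1n mul1r normrX.
  rewrite (ger0_norm (c0 n.+1)).
  have c_le' : c n.+1 <= n`!%:R^-1.
    rewrite -[X in _ <= X]div1r ler_pdivlMr ?ltr0n ?fact_gt0 //.
    apply: le_trans (c_le n.+1); rewrite mulrC ler_wpM2r // ler_nat leq_fact //.
  by rewrite exprS -mulrA ler_wpM2l // ler_wpM2l ?exprn_ge0.
- exact: is_cvg_seriesZ (is_cvg_series_exp_coeff _).
Qed.

Lemma cvg_series_recl (R : realType) (u : R ^nat) (a l : R) : u 0%N = a ->
  series (fun n => u n.+1) @ \oo --> l -> series u @ \oo --> a + l.
Proof.
move=> <- cvg_tail; rewrite -cvg_shiftS.
have -> : (fun n => series u n.+1) = (fun n => u 0%N + series (fun k => u k.+1) n).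
  by apply/funext => n; rewrite /series /= big_nat_recl.
exact: cvgD (cvg_cst _) cvg_tail.
Qed.

Theorem theorem3p2 (R : realType) (phi : R -> R)
  (phi_range : forall x : R, 0 <= x <= 1 -> 0 <= phi x <= 1)
  (phi_mono : forall x y : R, 0 <= x -> x <= y -> y <= 1 -> phi x <= phi y)
  (phi_cont : {within `[0, 1], continuous phi})
  (phi_gt : forall x : R, 0 < x < 1 -> x < phi x)
  (lam : R) :
  exists l1 l2 : R,
    series (fred_term (Vkernel phi) lam) @ \oo --> l1 /\
    series (fun n => (-1) ^+ n.+1 * lam ^+ n.+1 * chain_int phi n.+1 0) @ \oo --> l2 /\
    l1 = 1 + l2.
Proof.
have phi_ge := phi_ge_id phi_range phi_mono phi_gt.
have cvg_tail := @cvg_series_fact_bounded _ _ lam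
  (chain_int0_ge0 phi_mono phi_range) (fact_chain_int0_le1 phi_mono phi_ge phi_range).
set tail := series _ in cvg_tail *.
exists (1 + limn tail), (limn tail); split; last by split.
rewrite (funext (fred_term_Vkernel phi_mono phi_ge phi_range lam)).
by apply: cvg_series_recl cvg_tail; rewrite /= expr0 !mul1r.
Qed.
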